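(* Let $\Omega\subset\mathbb{R}^2$ be open and $\gamma:\Omega\to\mathbb{R}^2$ a smooth map satisfying $\gamma_{,tt}=\gamma_{,ss}$, $\langle\gamma_{,t},\gamma_{,s}\rangle = 0$ and $|\gamma_{,t}|^2+|\gamma_{,s}|^2=1$, and let $\mathcal{S}$ be the ``timelike maximal'' surface $\{(t,\gamma(t,s))\}\subset\mathbb{R}^{1+2}$. Suppose $(t_0,s_0)\in\Omega$ satisfies $\gamma_{,s}(t_0,s_0)=0$ and $\gamma_{,ts}(t_0,s_0)\neq0$. Then locally around $(t_0,s_0)$ the singularities of $\mathcal{S}$ (the points where $\gamma_{,s}=0$) lie along the null curve $s\mapsto(T(s),\gamma(T(s),s))$, where $T$ solves \[ T'(s) = -\frac{\langle\gamma_{,ss}(T(s),s),\gamma_{,ts}(T(s),s)\rangle}{|\gamma_{,ts}(T(s),s)|^2},\qquad T(s_0)=t_0. \] Furthermore, if $\gamma_{,ss}(t_0,s_0)=0$ and $\gamma_{,sss}(t_0,s_0)\neq0$, then these singularities are cusps (except possibly $\gamma(t_0,s_0)$), and the curve $s\mapsto(T(s),\gamma(T(s),s))$ lies entirely in the past of $t_0$ if $\langle\gamma_{,sss},\gamma_{,ts}\rangle(t_0,s_0)>0$ and entirely in the future if $\langle\gamma_{,sss},\gamma_{,ts}\rangle(t_0,s_0)<0$, and it splits into two null curves which join together at $(t_0,\gamma(t_0,s_0))$ as a cusp.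
   Context: $\mathbb{R}^{1+2}$ is Minkowski space with metric $-dt^2+|dx|^2$; subscripts after commas denote partial derivatives; $\langle\cdot,\cdot\rangle$ is the Euclidean inner product on $\mathbb{R}^2$. *)

From Stdlib Require Import Reals List.
From Coquelicot Require Import Coquelicot.
Open Scope R_scope.

Inductive pdir := Dt | Ds.

(* Iterated partial derivative of a scalar function f(t,s):
   pd (d1 :: d2 :: ... :: dk :: nil) f = d_{d1} d_{d2} ... d_{dk} f. *)
Fixpoint pd (w : list pdir) (f : R -> R -> R) {struct w} : R -> R -> R :=
  match w with
  | nil => f
  | Dt :: w' => fun t s => Derive (fun u => pd w' f u s) t
  | Ds :: w' => fun t s => Derive (fun u => pd w' f t u) s
  end.

Definition smooth_on (Om : R * R -> Prop) (f : R -> R -> R) : Prop :=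
  forall (w : list pdir) (t s : R), Om (t, s) ->
    ex_derive (fun u => pd w f u s) t /\
    ex_derive (fun u => pd w f t u) s /\
    continuous (fun p : R * R => pd w f (fst p) (snd p)) (t, s).

Definition gam1 (g : R -> R -> R * R) : R -> R -> R := fun t s => fst (g t s).
Definition gam2 (g : R -> R -> R * R) : R -> R -> R := fun t s => snd (g t s).

Definition smooth_map (Om : R * R -> Prop) (g : R -> R -> R * R) : Prop :=
  smooth_on Om (gam1 g) /\ smooth_on Om (gam2 g).

Definition pdv (w : list pdir) (g : R -> R -> R * R) (t s : R) : R * R :=
  (pd w (gam1 g) t s, pd w (gam2 g) t s).

Definition ip (u v : R * R) : R := fst u * fst v + snd u * snd v.
Definition nrm2 (u : R * R) : R := ip u u.
Definition det2 (u v : R * R) : R := fst u * snd v - snd u * fst v.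

Definition singular (g : R -> R -> R * R) (t s : R) : Prop :=
  pdv (Ds :: nil) g t s = (0, 0).

(* Components of the space-time curve s |-> (T(s), gamma(T(s), s)) in R^{1+2}. *)
Definition crv0 (T : R -> R) : R -> R := T.
Definition crv1 (T : R -> R) (g : R -> R -> R * R) : R -> R := fun u => fst (g (T u) u).
Definition crv2 (T : R -> R) (g : R -> R -> R * R) : R -> R := fun u => snd (g (T u) u).

Definition null_at (T : R -> R) (g : R -> R -> R * R) (s : R) : Prop :=
  - (Derive (crv0 T) s) ^ 2 + (Derive (crv1 T g) s) ^ 2 + (Derive (crv2 T g) s) ^ 2 = 0.

(* The time-slice curve sigma |-> gamma(t, sigma) has an ordinary (A2) cusp
   at sigma = s: it is singular there and gamma_ss, gamma_sss are linearly
   independent. *)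
Definition plane_cusp (g : R -> R -> R * R) (t s : R) : Prop :=
  singular g t s /\
  det2 (pdv (Ds :: Ds :: nil) g t s) (pdv (Ds :: Ds :: Ds :: nil) g t s) <> 0.

(* The space-time curve c(s) = (T(s), gamma(T(s), s)) has an ordinary cusp at
   s = s0: c'(s0) = 0 and c''(s0), c'''(s0) are linearly independent in R^3. *)
Definition spacetime_cusp (T : R -> R) (g : R -> R -> R * R) (s0 : R) : Prop :=
  Derive (crv0 T) s0 = 0 /\ Derive (crv1 T g) s0 = 0 /\ Derive (crv2 T g) s0 = 0 /\
  forall a b : R,
    a * Derive_n (crv0 T) 2 s0 + b * Derive_n (crv0 T) 3 s0 = 0 ->
    a * Derive_n (crv1 T g) 2 s0 + b * Derive_n (crv1 T g) 3 s0 = 0 ->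
    a * Derive_n (crv2 T g) 2 s0 + b * Derive_n (crv2 T g) 3 s0 = 0 ->
    a = 0 /\ b = 0.

(* Where g_s = 0, the hypotheses <g_t, g_s> = 0 and |g_t|^2 + |g_s|^2 = 1
   force |g_t| = 1 and <g_t, g_ts> = 0, so det(g_t, g_s), which vanishes exactly where g_s
   does, has t-derivative det(g_t, g_ts) = +-|g_ts| <> 0.  The implicit function theorem
   describes the singular set as a smooth graph t = T(s); differentiating g_s(T(s), s) = 0
   gives g_ts T' + g_ss = 0, hence the equation for T, and |g_t| = 1 makes the curve
   (T, g(T, s)) null.  If moreover g_ss(t0,s0) = 0, then T'(s0) = 0 and one more derivative
   gives g_ts T''(s0) = - g_sss(t0,s0), so T has a strict extremum at s0 whose type is given
   by the sign of <g_sss, g_ts>.  Differentiating <g_t, g_s> = 0 twice in s yields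
   <g_t, g_sss> = 2 T' |g_ts|^2 on the singular curve, which makes det(g_ss, g_sss) nonzero
   wherever T' <> 0: the time slices have ordinary cusps there. *)

From Stdlib Require Import Reals List Lra Psatz ClassicalEpsilon Ranalysis5.
From Coquelicot Require Import Coquelicot.
Open Scope R_scope.

(** * Smooth functions of two variables *)

Definition dt (F : R -> R -> R) : R -> R -> R := fun t s => Derive (fun z => F z s) t.
Definition ds (F : R -> R -> R) : R -> R -> R := fun t s => Derive (fun z => F t z) s.
(* [pd (Dt :: w) f] and [pd (Ds :: w) f] are convertible to [dt (pd w f)] and [ds (pd w f)]. *)

Definition Cn (V : R * R -> Prop) (n : nat) (F : R -> R -> R) : Prop :=
  forall t s, V (t, s) -> ex_diff_n F n t s.
Definition Cinf (V : R * R -> Prop) (F : R -> R -> R) : Prop := forall n, Cn V n F.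

Lemma locally_2d_open (V : R * R -> Prop) t s :
  open V -> V (t, s) -> locally_2d (fun u v => V (u, v)) t s.
Proof.
  intros HV H. apply locally_2d_locally.
  eapply filter_imp; [|exact (HV _ H)]. now intros [a b].
Qed.

Lemma locally_2d_open_sub (V : R * R -> Prop) (P : R -> R -> Prop) t s :
  open V -> V (t, s) -> (forall u v, V (u, v) -> P u v) -> locally_2d P t s.
Proof.
  intros HV H HP. apply (locally_2d_impl (fun u v => V (u, v))).
  - apply locally_2d_forall. exact HP.
  - now apply locally_2d_open.
Qed.

Lemma locally_open_t (V : R * R -> Prop) t s :
  open V -> V (t, s) -> @locally R_UniformSpace t (fun z => V (z, s)).
Proof. intros HV H. apply (locally_2d_1d_const_y (fun u v => V (u, v))), locally_2d_open; auto. Qed.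

Lemma locally_open_s (V : R * R -> Prop) t s :
  open V -> V (t, s) -> @locally R_UniformSpace s (fun z => V (t, z)).
Proof. intros HV H. apply (locally_2d_1d_const_x (fun u v => V (u, v))), locally_2d_open; auto. Qed.

Lemma locally_Rabs_lt s0 eps s :
  Rabs (s - s0) < eps -> @locally R_UniformSpace s (fun u => Rabs (u - s0) < eps).
Proof.
  intros Hs. assert (Hp : 0 < eps - Rabs (s - s0)) by lra.
  exists (mkposreal _ Hp). intros y Hy. simpl in Hy.
  change (Rabs (y - s) < eps - Rabs (s - s0)) in Hy.
  replace (y - s0) with ((y - s) + (s - s0)) by ring.
  eapply Rle_lt_trans; [apply Rabs_triang|]. lra.
Qed.

Lemma open_rectangle t0 s0 r :
  open (fun p : R * R => Rabs (fst p - t0) < r /\ Rabs (snd p - s0) < r).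
Proof.
  intros [u v] [Hu Hv]. simpl in Hu, Hv.
  apply (locally_2d_locally (fun a b => Rabs (a - t0) < r /\ Rabs (b - s0) < r) u v).
  assert (Hp : 0 < Rmin (r - Rabs (u - t0)) (r - Rabs (v - s0))) by (apply Rmin_pos; lra).
  exists (mkposreal _ Hp). intros a b Ha Hb. simpl in Ha, Hb.
  assert (Ha1 := Rlt_le_trans _ _ _ Ha (Rmin_l _ _)).
  assert (Hb1 := Rlt_le_trans _ _ _ Hb (Rmin_r _ _)).
  split.
  - replace (a - t0) with ((a - u) + (u - t0)) by ring.
    eapply Rle_lt_trans; [apply Rabs_triang|]. lra.
  - replace (b - s0) with ((b - v) + (v - s0)) by ring.
    eapply Rle_lt_trans; [apply Rabs_triang|]. lra.
Qed.

Lemma open_and_lt (V : R * R -> Prop) K c : open V ->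
  (forall t s, V (t, s) -> continuity_2d_pt K t s) ->
  open (fun p : R * R => V p /\ c < K (fst p) (snd p)).
Proof.
  intros HV HK [t s] [H1 H2]. simpl in H2.
  assert (Hp : 0 < K t s - c) by lra.
  destruct (HK t s H1 (mkposreal _ Hp)) as [d Hd].
  assert (L : locally (t, s) (fun p : R * R => c < K (fst p) (snd p))).
  { apply (locally_2d_locally (fun u v => c < K u v)). exists d. intros u v Hu Hv.
    specialize (Hd u v Hu Hv). simpl in Hd. apply Rabs_lt_between in Hd. lra. }
  generalize (filter_and _ _ (HV _ H1) L). apply filter_imp. auto.
Qed.

Lemma is_derive_zero_of_locally_zero (f : R -> R) x l :
  @locally R_UniformSpace x (fun u => f u = 0) -> is_derive f x l -> l = 0.
Proof.
  intros Hl Hd.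
  assert (H : is_derive (fun _ => 0) x l) by (apply (is_derive_ext_loc f); auto).
  apply is_derive_unique in H. now rewrite Derive_const in H.
Qed.

Lemma ex_diff_n_ex_derive_t F n t s : ex_diff_n F (S n) t s -> ex_derive (fun z => F z s) t.
Proof. now intros [_ [H _]]. Qed.
Lemma ex_diff_n_ex_derive_s F n t s : ex_diff_n F (S n) t s -> ex_derive (fun z => F t z) s.
Proof. now intros [_ [_ [H _]]]. Qed.
Lemma ex_diff_n_continuity F n t s : ex_diff_n F n t s -> continuity_2d_pt F t s.
Proof. now destruct n; intros [H _]. Qed.

Lemma ex_diff_n_continuity_t F n t s : ex_diff_n F (S n) t s -> continuity_pt (fun z => F z s) t.
Proof.
  intros H. apply continuity_pt_filterlim, (ex_derive_continuous (fun z => F z s)).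
  eapply ex_diff_n_ex_derive_t; eauto.
Qed.

Lemma ex_diff_n_const n : forall c x y, ex_diff_n (fun _ _ => c) n x y.
Proof.
  induction n; intros c x y; simpl.
  - split; [apply continuity_2d_pt_const|exact I].
  - repeat split; [apply continuity_2d_pt_const|apply ex_derive_const|apply ex_derive_const| |];
      apply (ex_diff_n_ext_loc (fun _ _ => 0)); try apply IHn;
      apply locally_2d_forall; intros; symmetry; apply Derive_const.
Qed.

Lemma ex_diff_n_fst n x y : ex_diff_n (fun u _ => u) n x y.
Proof.
  destruct n; simpl.
  - split; [apply continuity_2d_pt_id1|exact I].
  - repeat split; [apply continuity_2d_pt_id1|apply ex_derive_id|apply ex_derive_const| |].
    + apply (ex_diff_n_ext_loc (fun _ _ => 1)); [|apply ex_diff_n_const].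
      apply locally_2d_forall; intros; symmetry; apply Derive_id.
    + apply (ex_diff_n_ext_loc (fun _ _ => 0)); [|apply ex_diff_n_const].
      apply locally_2d_forall; intros; symmetry; apply Derive_const.
Qed.

Section SmoothCalculus.

Variable V : R * R -> Prop.
Hypothesis HV : open V.

Lemma Cn_ext n F G : Cn V n F -> (forall t s, V (t, s) -> F t s = G t s) -> Cn V n G.
Proof.
  intros HF E t s Hts. apply (ex_diff_n_ext_loc F G); [|now apply HF].
  now apply (locally_2d_open_sub V).
Qed.

Lemma Cn_le n m F : (m <= n)%nat -> Cn V n F -> Cn V m F.
Proof. intros Hl H t s Hts. apply (ex_diff_n_m n m Hl), H, Hts. Qed.

Lemma Cn_dt n F : Cn V (S n) F -> Cn V n (dt F).
Proof. intros H t s Hts. apply ex_diff_n_deriv_aux1, H, Hts. Qed.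
Lemma Cn_ds n F : Cn V (S n) F -> Cn V n (ds F).
Proof. intros H t s Hts. apply ex_diff_n_deriv_aux2, H, Hts. Qed.

Lemma Cn_plus n : forall F G, Cn V n F -> Cn V n G -> Cn V n (fun t s => F t s + G t s).
Proof.
  induction n; intros F G HF HG t s Hts.
  - split; [|exact I].
    apply continuity_2d_pt_plus; eapply ex_diff_n_continuity; [apply HF|apply HG]; auto.
  - pose proof (HF t s Hts) as HF0. pose proof (HG t s Hts) as HG0.
    repeat split.
    + apply continuity_2d_pt_plus; eapply ex_diff_n_continuity; eauto.
    + apply (ex_derive_plus (fun z => F z s) (fun z => G z s)); eapply ex_diff_n_ex_derive_t; eauto.
    + apply (ex_derive_plus (fun z => F t z) (fun z => G t z)); eapply ex_diff_n_ex_derive_s; eauto.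
    + apply (Cn_ext n (fun u v => dt F u v + dt G u v)); [apply IHn; now apply Cn_dt| |exact Hts].
      intros u v Huv. symmetry.
      apply (Derive_plus (fun z => F z v) (fun z => G z v)); eapply ex_diff_n_ex_derive_t; eauto.
    + apply (Cn_ext n (fun u v => ds F u v + ds G u v)); [apply IHn; now apply Cn_ds| |exact Hts].
      intros u v Huv. symmetry.
      apply (Derive_plus (fun z => F u z) (fun z => G u z)); eapply ex_diff_n_ex_derive_s; eauto.
Qed.

Lemma Cn_mult n : forall F G, Cn V n F -> Cn V n G -> Cn V n (fun t s => F t s * G t s).
Proof.
  induction n; intros F G HF HG t s Hts.
  - split; [|exact I].
    apply continuity_2d_pt_mult; eapply ex_diff_n_continuity; [apply HF|apply HG]; auto.
  - pose proof (HF t s Hts) as HF0. pose proof (HG t s Hts) as HG0.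
    assert (HFn : Cn V n F) by (apply (Cn_le (S n)); auto).
    assert (HGn : Cn V n G) by (apply (Cn_le (S n)); auto).
    repeat split.
    + apply continuity_2d_pt_mult; eapply ex_diff_n_continuity; eauto.
    + apply (ex_derive_mult (fun z => F z s) (fun z => G z s)); eapply ex_diff_n_ex_derive_t; eauto.
    + apply (ex_derive_mult (fun z => F t z) (fun z => G t z)); eapply ex_diff_n_ex_derive_s; eauto.
    + apply (Cn_ext n (fun u v => dt F u v * G u v + F u v * dt G u v)); [| |exact Hts].
      * apply Cn_plus; apply IHn; auto; now apply Cn_dt.
      * intros u v Huv. symmetry.
        apply (Derive_mult (fun z => F z v) (fun z => G z v)); eapply ex_diff_n_ex_derive_t; eauto.
    + apply (Cn_ext n (fun u v => ds F u v * G u v + F u v * ds G u v)); [| |exact Hts].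
      * apply Cn_plus; apply IHn; auto; now apply Cn_ds.
      * intros u v Huv. symmetry.
        apply (Derive_mult (fun z => F u z) (fun z => G u z)); eapply ex_diff_n_ex_derive_s; eauto.
Qed.

Lemma Cn_inv n : forall F, Cn V n F -> (forall t s, V (t, s) -> F t s <> 0) ->
  Cn V n (fun t s => / F t s).
Proof.
  induction n; intros F HF Hnz t s Hts.
  - split; [|exact I]. apply continuity_2d_pt_inv; auto. eapply ex_diff_n_continuity; apply HF; auto.
  - pose proof (HF t s Hts) as HF0.
    assert (HFn : Cn V n F) by (apply (Cn_le (S n)); auto).
    assert (Hsq : Cn V n (fun u v => / F u v * / F u v)) by (apply Cn_mult; apply IHn; auto).
    repeat split.
    + apply continuity_2d_pt_inv; auto. eapply ex_diff_n_continuity; eauto.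
    + apply (ex_derive_inv (fun z => F z s)); auto; eapply ex_diff_n_ex_derive_t; eauto.
    + apply (ex_derive_inv (fun z => F t z)); auto; eapply ex_diff_n_ex_derive_s; eauto.
    + apply (Cn_ext n (fun u v => (-1 * dt F u v) * (/ F u v * / F u v))); [| |exact Hts].
      * apply Cn_mult; auto. apply Cn_mult; [intros ? ? _; apply ex_diff_n_const|now apply Cn_dt].
      * intros u v Huv. unfold dt.
        rewrite (Derive_inv (fun z => F z v)); auto; [field; auto|eapply ex_diff_n_ex_derive_t; eauto].
    + apply (Cn_ext n (fun u v => (-1 * ds F u v) * (/ F u v * / F u v))); [| |exact Hts].
      * apply Cn_mult; auto. apply Cn_mult; [intros ? ? _; apply ex_diff_n_const|now apply Cn_ds].
      * intros u v Huv. unfold ds.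
        rewrite (Derive_inv (fun z => F u z)); auto; [field; auto|eapply ex_diff_n_ex_derive_s; eauto].
Qed.

Lemma Cinf_const c : Cinf V (fun _ _ => c).
Proof. intros n t s _; apply ex_diff_n_const. Qed.
Lemma Cinf_fst : Cinf V (fun u _ => u).
Proof. intros n t s _; apply ex_diff_n_fst. Qed.
Lemma Cinf_plus F G : Cinf V F -> Cinf V G -> Cinf V (fun t s => F t s + G t s).
Proof. intros; intro n; now apply Cn_plus. Qed.
Lemma Cinf_mult F G : Cinf V F -> Cinf V G -> Cinf V (fun t s => F t s * G t s).
Proof. intros; intro n; now apply Cn_mult. Qed.
Lemma Cinf_inv F : Cinf V F -> (forall t s, V (t, s) -> F t s <> 0) -> Cinf V (fun t s => / F t s).
Proof. intros; intro n; now apply Cn_inv. Qed.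
Lemma Cinf_dt F : Cinf V F -> Cinf V (dt F).
Proof. intros H n; apply Cn_dt, H. Qed.
Lemma Cinf_ds F : Cinf V F -> Cinf V (ds F).
Proof. intros H n; apply Cn_ds, H. Qed.
Lemma Cinf_ext F G : Cinf V F -> (forall t s, V (t, s) -> F t s = G t s) -> Cinf V G.
Proof. intros H E n; eapply Cn_ext; eauto. Qed.
Lemma Cinf_opp F : Cinf V F -> Cinf V (fun t s => - F t s).
Proof.
  intros H. apply (Cinf_ext (fun t s => -1 * F t s)); [|intros; ring].
  apply Cinf_mult; auto; apply Cinf_const.
Qed.
Lemma Cinf_minus F G : Cinf V F -> Cinf V G -> Cinf V (fun t s => F t s - G t s).
Proof. intros. apply Cinf_plus; auto. now apply Cinf_opp. Qed.

Lemma is_derive_dt F t s : Cinf V F -> V (t, s) -> is_derive (fun z => F z s) t (dt F t s).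
Proof. intros H Ht. apply Derive_correct, (ex_diff_n_ex_derive_t F 0), H, Ht. Qed.
Lemma is_derive_ds F t s : Cinf V F -> V (t, s) -> is_derive (fun z => F t z) s (ds F t s).
Proof. intros H Ht. apply Derive_correct, (ex_diff_n_ex_derive_s F 0), H, Ht. Qed.

Lemma Cinf_continuity F t s : Cinf V F -> V (t, s) -> continuity_2d_pt F t s.
Proof. intros H Ht. apply (ex_diff_n_continuity _ 0), H, Ht. Qed.

Lemma dt_ds_comm F t s : Cinf V F -> V (t, s) -> dt (ds F) t s = ds (dt F) t s.
Proof.
  intros HF Hts. apply Schwarz.
  - apply (locally_2d_open_sub V); auto. intros u v Huv. repeat split.
    + apply (ex_diff_n_ex_derive_t F 0), HF, Huv.
    + apply (ex_diff_n_ex_derive_s F 0), HF, Huv.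
    + apply (ex_diff_n_ex_derive_t (ds F) 0), (Cinf_ds F HF 1%nat), Huv.
    + apply (ex_diff_n_ex_derive_s (dt F) 0), (Cinf_dt F HF 1%nat), Huv.
  - apply (Cinf_continuity (dt (ds F))); auto. now apply Cinf_dt, Cinf_ds.
  - apply (Cinf_continuity (ds (dt F))); auto. now apply Cinf_ds, Cinf_dt.
Qed.

End SmoothCalculus.

Lemma Cinf_of_smooth_on Om f : smooth_on Om f -> forall w, Cinf Om (pd w f).
Proof.
  intros H w n. revert w. induction n; intros w t s Hts; destruct (H w t s Hts) as [H1 [H2 H3]].
  - split; [|exact I]. now apply continuity_2d_pt_filterlim.
  - repeat split; auto.
    + now apply continuity_2d_pt_filterlim.
    + apply (IHn (Dt :: w)); auto.
    + apply (IHn (Ds :: w)); auto.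
Qed.

Lemma Cinf_sub V W F : (forall p, W p -> V p) -> Cinf V F -> Cinf W F.
Proof. intros HW H n t s Hts. apply H, HW, Hts. Qed.

Lemma differentiable_pt_lim_of_C2 (F : R -> R -> R) x y :
  locally_2d (fun u v => ex_diff_n F 2 u v) x y ->
  differentiable_pt_lim F x y (dt F x y) (ds F x y).
Proof.
  intros H. destruct (Taylor_Lagrange_2d F 1 x y H) as [D [d Hd]].
  unfold DL_pol, differential, partial_derive in Hd. simpl in Hd.
  assert (HC : Binomial.C 0 0 = 1 /\ Binomial.C 1 0 = 1 /\ Binomial.C 1 1 = 1)
    by (unfold Binomial.C; simpl; repeat split; field).
  destruct HC as (H00 & H10 & H11). rewrite H00, H10, H11 in Hd.
  intros eps. set (D' := Rmax D 1).
  assert (HD' : 0 < D') by (unfold D'; generalize (Rmax_r D 1); lra).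
  assert (HDD : D <= D') by apply Rmax_l.
  assert (Hp : 0 < Rmin d (eps / D')).
  { apply Rmin_pos; [apply cond_pos|apply Rdiv_lt_0_compat; [apply cond_pos|lra]]. }
  exists (mkposreal _ Hp). intros u v Hu Hv. simpl in Hu, Hv.
  specialize (Hd u v (Rlt_le_trans _ _ _ Hu (Rmin_l _ _)) (Rlt_le_trans _ _ _ Hv (Rmin_l _ _))).
  set (M := Rmax (Rabs (u - x)) (Rabs (v - y))) in *.
  assert (HM0 : 0 <= M) by (unfold M; generalize (Rmax_l (Rabs (u - x)) (Rabs (v - y))) (Rabs_pos (u - x)); lra).
  assert (HM : M <= eps / D').
  { unfold M; apply Rmax_lub; eapply Rlt_le, Rlt_le_trans; eauto; apply Rmin_r. }
  assert (HDM : D' * M <= eps).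
  { apply (Rmult_le_compat_l D') in HM; [|lra]. unfold Rdiv in HM.
    rewrite <- Rmult_assoc, (Rmult_comm D' eps), Rmult_assoc, Rinv_r, Rmult_1_r in HM; lra. }
  unfold dt, ds.
  match type of Hd with Rabs (F u v - ?P) <= _ => replace P with
    (F x y + (Derive (fun z => F z y) x * (u - x) + Derive (fun z => F x z) y * (v - y))) in Hd by field end.
  replace (F u v - F x y - _) with
    (F u v - (F x y + (Derive (fun z => F z y) x * (u - x) + Derive (fun z => F x z) y * (v - y)))) by ring.
  eapply Rle_trans; [exact Hd|]. fold M. nra.
Qed.

Lemma is_derive_along_graph V F (T : R -> R) s l : open V -> Cn V 2 F -> V (T s, s) ->
  is_derive T s l -> is_derive (fun u => F (T u) u) s (dt F (T s) s * l + ds F (T s) s).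
Proof.
  intros HV HF Hs HT.
  assert (HD : differentiable_pt_lim F (T s) s (dt F (T s) s) (ds F (T s) s)).
  { apply differentiable_pt_lim_of_C2, (locally_2d_open_sub V); auto. }
  apply is_derive_Reals. apply is_derive_Reals in HT.
  rewrite <- (Rmult_1_r (ds F (T s) s)).
  apply (derivable_pt_lim_comp_2d F T (fun t => t)); auto using derivable_pt_lim_id.
Qed.

(** * The implicit function theorem *)

Lemma continuity_2d_pt_sign F x y : continuity_2d_pt F x y -> F x y <> 0 ->
  exists d, 0 < d /\ forall v, Rabs (v - y) < d -> 0 < F x v * F x y.
Proof.
  intros Hc Hne. destruct (Hc (mkposreal _ (Rabs_pos_lt _ Hne))) as [d Hd].
  exists d. split; [apply cond_pos|]. intros v Hv.
  specialize (Hd x v ltac:(rewrite Rminus_diag, Rabs_R0; apply cond_pos) Hv). simpl in Hd.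
  apply Rabs_lt_between in Hd.
  destruct (Rcase_abs (F x y)); [rewrite Rabs_left in Hd|rewrite Rabs_right in Hd]; nra.
Qed.

Lemma rectangle_pos (V : R * R -> Prop) K t0 s0 : open V -> V (t0, s0) ->
  continuity_2d_pt K t0 s0 -> 0 < K t0 s0 ->
  exists r, 0 < r /\
    forall u v, Rabs (u - t0) < r -> Rabs (v - s0) < r -> V (u, v) /\ 0 < K u v.
Proof.
  intros HV H0 Hc Hpos.
  destruct (Hc (mkposreal _ Hpos)) as [d1 Hd1].
  destruct (locally_2d_open V t0 s0 HV H0) as [d2 Hd2].
  exists (Rmin d1 d2). split; [apply Rmin_pos; apply cond_pos|]. intros u v Hu Hv.
  split; [apply Hd2; eapply Rlt_le_trans; eauto; apply Rmin_r|].
  assert (Hk := Hd1 u v ltac:(eapply Rlt_le_trans; eauto; apply Rmin_l)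
                          ltac:(eapply Rlt_le_trans; eauto; apply Rmin_l)).
  simpl in Hk. apply Rabs_lt_between in Hk. lra.
Qed.

Section ImplicitFunction.

Variables (V : R * R -> Prop) (F : R -> R -> R) (t0 s0 r : R).
Hypotheses (HV : open V) (HF : Cinf V F) (Hr : 0 < r)
  (Hrect : forall u v, Rabs (u - t0) < r -> Rabs (v - s0) < r -> V (u, v) /\ 0 < dt F u v).

Lemma F_strict_incr v x y : Rabs (v - s0) < r -> Rabs (x - t0) < r -> Rabs (y - t0) < r ->
  x < y -> F x v < F y v.
Proof.
  intros Hv Hx Hy Hxy. apply Rabs_lt_between in Hx, Hy.
  apply (incr_function (fun z => F z v) (t0 - r) (t0 + r) (fun u => dt F u v)); simpl; try lra;
    intros u H1 H2; assert (Hu : Rabs (u - t0) < r) by (apply Rabs_lt_between; lra).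
  - apply (is_derive_dt V); auto. now apply Hrect.
  - now apply Hrect.
Qed.

Lemma zero_between v a b t : Rabs (v - s0) < r -> Rabs (a - t0) < r -> Rabs (b - t0) < r ->
  Rabs (t - t0) < r -> F a v < 0 -> 0 < F b v -> F t v = 0 -> a < t < b.
Proof.
  intros Hv Ha Hb Ht Fa Fb Ft. split.
  - destruct (Rtotal_order a t) as [|[<-|Hta]]; [auto|lra|].
    generalize (F_strict_incr v t a Hv Ht Ha Hta). lra.
  - destruct (Rtotal_order t b) as [|[->|Hbt]]; [auto|lra|].
    generalize (F_strict_incr v b t Hv Hb Ht Hbt). lra.
Qed.

Lemma zero_exists v a b : Rabs (v - s0) < r -> Rabs (a - t0) < r -> Rabs (b - t0) < r ->
  a < b -> F a v < 0 -> 0 < F b v -> exists t, a < t < b /\ F t v = 0.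
Proof.
  intros Hv Ha Hb Hab Fa Fb.
  assert (Hin : forall z, a <= z <= b -> Rabs (z - t0) < r).
  { apply Rabs_lt_between in Ha, Hb. intros z Hz. apply Rabs_lt_between; lra. }
  destruct (IVT_interv (fun z => F z v) a b) as [z [Hz Fz]]; auto.
  { intros z Hz. apply (ex_diff_n_continuity_t F 0), (HF 1%nat), Hrect; auto. }
  exists z. split; auto. apply (zero_between v); auto.
Qed.

Lemma zero_bracket x v0 e : 0 < e -> Rabs (x - e - t0) < r -> Rabs (x + e - t0) < r ->
  Rabs (v0 - s0) < r -> F x v0 = 0 ->
  exists d, 0 < d /\ forall v, Rabs (v - v0) < d -> F (x - e) v < 0 < F (x + e) v.
Proof.
  intros He Hm Hp Hv0 Fx.
  assert (Hx : Rabs (x - t0) < r) by (apply Rabs_lt_between in Hm, Hp; apply Rabs_lt_between; lra).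
  assert (Fm : F (x - e) v0 < 0) by (rewrite <- Fx; apply F_strict_incr; auto; lra).
  assert (Fp : 0 < F (x + e) v0) by (rewrite <- Fx; apply F_strict_incr; auto; lra).
  destruct (continuity_2d_pt_sign F (x - e) v0) as [d1 [Hd1 Sm]].
  { apply (Cinf_continuity V); auto. now apply Hrect. }
  { lra. }
  destruct (continuity_2d_pt_sign F (x + e) v0) as [d2 [Hd2 Sp]].
  { apply (Cinf_continuity V); auto. now apply Hrect. }
  { lra. }
  exists (Rmin d1 d2). split; [now apply Rmin_pos|]. intros v Hv.
  specialize (Sm v (Rlt_le_trans _ _ _ Hv (Rmin_l _ _))).
  specialize (Sp v (Rlt_le_trans _ _ _ Hv (Rmin_r _ _))).
  split; nra.
Qed.

Definition implicit_root (s : R) : R :=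
  epsilon (inhabits t0) (fun t => Rabs (t - t0) < r /\ F t s = 0).

Lemma implicit_root_unique t s : Rabs (s - s0) < r -> Rabs (t - t0) < r -> F t s = 0 ->
  t = implicit_root s.
Proof.
  intros Hs Ht Ft.
  destruct (epsilon_spec (inhabits t0) (fun t => Rabs (t - t0) < r /\ F t s = 0)) as [Hr' Fr];
    [now exists t|].
  fold (implicit_root s) in Hr', Fr.
  destruct (Rtotal_order t (implicit_root s)) as [Hl|[Hl|Hl]]; auto.
  - generalize (F_strict_incr s _ _ Hs Ht Hr' Hl). lra.
  - generalize (F_strict_incr s _ _ Hs Hr' Ht Hl). lra.
Qed.

Lemma implicit_root_near (HF0 : F t0 s0 = 0) : exists eps, 0 < eps <= r /\
  forall s, Rabs (s - s0) < eps ->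
    Rabs (implicit_root s - t0) < r / 2 /\ F (implicit_root s) s = 0.
Proof.
  assert (Hm : Rabs (t0 - r / 2 - t0) < r)
    by (replace (t0 - r / 2 - t0) with (- (r / 2)) by ring; rewrite Rabs_Ropp, Rabs_pos_eq; lra).
  assert (Hp : Rabs (t0 + r / 2 - t0) < r)
    by (replace (t0 + r / 2 - t0) with (r / 2) by ring; rewrite Rabs_pos_eq; lra).
  assert (H0 : Rabs (s0 - s0) < r) by (rewrite Rminus_diag, Rabs_R0; lra).
  destruct (zero_bracket t0 s0 (r / 2)) as [d [Hd Hbr]]; auto; try lra.
  exists (Rmin r d). split; [split; [now apply Rmin_pos|apply Rmin_l]|]. intros s Hs.
  assert (Hsr := Rlt_le_trans _ _ _ Hs (Rmin_l _ _)).
  assert (Hsd := Rlt_le_trans _ _ _ Hs (Rmin_r _ _)).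
  destruct (Hbr s Hsd) as [Fm Fp].
  destruct (zero_exists s _ _ Hsr Hm Hp ltac:(lra) Fm Fp) as [t [Ht Ft]].
  assert (Ht' : Rabs (t - t0) < r / 2) by (apply Rabs_lt_between; lra).
  now rewrite <- (implicit_root_unique t s Hsr ltac:(lra) Ft).
Qed.

Variable eps : R.
Hypotheses (Heps : 0 < eps) (Hepsr : eps <= r)
  (Hroot : forall s, Rabs (s - s0) < eps ->
     Rabs (implicit_root s - t0) < r / 2 /\ F (implicit_root s) s = 0).

Lemma implicit_root_continuous s : Rabs (s - s0) < eps ->
  forall eta, 0 < eta -> exists d, 0 < d /\
    forall h, Rabs h < d -> Rabs (implicit_root (s + h) - implicit_root s) < eta.
Proof.
  intros Hs eta Heta. set (e := Rmin eta (r / 2)).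
  assert (He : 0 < e) by (apply Rmin_pos; lra).
  assert (He1 : e <= eta) by apply Rmin_l.
  assert (He2 : e <= r / 2) by apply Rmin_r.
  destruct (Hroot s Hs) as [HTs FTs].
  assert (Hm : Rabs (implicit_root s - e - t0) < r)
    by (apply Rabs_lt_between in HTs; apply Rabs_lt_between; lra).
  assert (Hp : Rabs (implicit_root s + e - t0) < r)
    by (apply Rabs_lt_between in HTs; apply Rabs_lt_between; lra).
  destruct (zero_bracket (implicit_root s) s e He Hm Hp ltac:(lra) FTs) as [d [Hd Hbr]].
  exists (Rmin d (eps - Rabs (s - s0))). split; [apply Rmin_pos; lra|]. intros h Hh.
  assert (Hh1 := Rlt_le_trans _ _ _ Hh (Rmin_l _ _)).
  assert (Hh2 := Rlt_le_trans _ _ _ Hh (Rmin_r _ _)).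
  assert (Hsh : Rabs (s + h - s0) < eps).
  { replace (s + h - s0) with ((s - s0) + h) by ring.
    eapply Rle_lt_trans; [apply Rabs_triang|]. lra. }
  destruct (Hroot _ Hsh) as [HTh FTh].
  destruct (Hbr (s + h)) as [Fm Fp]; [now replace (s + h - s) with h by ring|].
  destruct (zero_between (s + h) _ _ (implicit_root (s + h)) ltac:(lra) Hm Hp ltac:(lra) Fm Fp FTh).
  apply Rabs_lt_between; lra.
Qed.

Lemma linear_remainder_estimate k h l c : 0 <= c <= 1 / 2 ->
  Rabs (k - l * h) <= c * (Rabs k + Rabs h) ->
  Rabs (k - l * h) <= c * (2 * Rabs l + 2) * Rabs h.
Proof.
  intros Hc H.
  assert (Hk : Rabs k <= Rabs (k - l * h) + Rabs l * Rabs h).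
  { rewrite <- Rabs_mult. replace k with ((k - l * h) + l * h) at 1 by ring. apply Rabs_triang. }
  assert (Hck : c * Rabs k <= c * (Rabs (k - l * h) + Rabs l * Rabs h))
    by (apply Rmult_le_compat_l; lra).
  assert (Hhalf : c * Rabs (k - l * h) <= / 2 * Rabs (k - l * h))
    by (apply Rmult_le_compat_r; [apply Rabs_pos|lra]).
  lra.
Qed.

Lemma implicit_root_increment s : Rabs (s - s0) < eps -> forall c, 0 < c ->
  exists d, 0 < d /\ forall h, Rabs h < d ->
    Rabs (implicit_root (s + h) - implicit_root s -
          - ds F (implicit_root s) s / dt F (implicit_root s) s * h) <=
    c * (Rabs (implicit_root (s + h) - implicit_root s) + Rabs h).
Proof.
  intros Hs c Hc. destruct (Hroot s Hs) as [HTs FTs].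
  destruct (Hrect (implicit_root s) s ltac:(lra) ltac:(lra)) as [HVs Ha].
  set (t := implicit_root s) in *. set (a := dt F t s) in *. set (b := ds F t s).
  assert (HD : differentiable_pt_lim F t s a b)
    by (apply differentiable_pt_lim_of_C2, (locally_2d_open_sub V); auto; intros u v Huv; apply HF, Huv).
  destruct (HD (mkposreal (c * a) ltac:(nra))) as [dd Hdd].
  destruct (implicit_root_continuous s Hs dd (cond_pos dd)) as [dc [Hdc0 Hdc]].
  exists (Rmin (Rmin dd dc) (eps - Rabs (s - s0))).
  split; [apply Rmin_pos; [apply Rmin_pos; [apply cond_pos|auto]|lra]|]. intros h Hh.
  assert (Hh1 := Rlt_le_trans _ _ _ Hh (Rmin_l _ _)).
  assert (Hh2 := Rlt_le_trans _ _ _ Hh (Rmin_r _ _)).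
  assert (Hsh : Rabs (s + h - s0) < eps).
  { replace (s + h - s0) with ((s - s0) + h) by ring.
    eapply Rle_lt_trans; [apply Rabs_triang|]. lra. }
  destruct (Hroot (s + h) Hsh) as [_ FTh].
  specialize (Hdd (implicit_root (s + h)) (s + h) (Hdc h (Rlt_le_trans _ _ _ Hh1 (Rmin_r _ _)))
                  ltac:(replace (s + h - s) with h by ring; exact (Rlt_le_trans _ _ _ Hh1 (Rmin_l _ _)))).
  rewrite FTh, FTs in Hdd. replace (s + h - s) with h in Hdd by ring.
  set (k := implicit_root (s + h) - t) in *.
  replace (0 - 0 - (a * k + b * h)) with (- (a * (k - - b / a * h))) in Hdd by (field; lra).
  rewrite Rabs_Ropp, Rabs_mult, (Rabs_pos_eq a) in Hdd by lra.
  apply (Rmult_le_reg_l a); auto. eapply Rle_trans; [exact Hdd|]. simpl.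
  replace (a * (c * (Rabs k + Rabs h))) with (c * a * (Rabs k + Rabs h)) by ring.
  apply Rmult_le_compat_l; [nra|].
  apply Rmax_lub; generalize (Rabs_pos k) (Rabs_pos h); lra.
Qed.

Lemma implicit_root_derive s : Rabs (s - s0) < eps ->
  is_derive implicit_root s (- ds F (implicit_root s) s / dt F (implicit_root s) s).
Proof.
  intros Hs. set (l := - ds F (implicit_root s) s / dt F (implicit_root s) s).
  apply is_derive_Reals. intros eps' Heps'.
  set (K := 2 * Rabs l + 2).
  assert (HK : 0 < K) by (unfold K; generalize (Rabs_pos l); lra).
  set (c := Rmin (1 / 2) (eps' / (2 * K))).
  assert (Hc : 0 < c) by (apply Rmin_pos; [lra|apply Rdiv_lt_0_compat; lra]).
  assert (Hc2 : c * K <= eps' / 2).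
  { assert (H : c <= eps' / (2 * K)) by apply Rmin_r.
    apply (Rmult_le_compat_r K) in H; [|lra].
    replace (eps' / (2 * K) * K) with (eps' / 2) in H by (field; lra). lra. }
  destruct (implicit_root_increment s Hs c Hc) as [d [Hd Hinc]].
  exists (mkposreal d Hd). intros h Hh0 Hh.
  assert (Hest := linear_remainder_estimate _ _ _ _ (conj (Rlt_le _ _ Hc) (Rmin_l _ _)) (Hinc h Hh)).
  fold l K in Hest.
  assert (Hhp : 0 < Rabs h) by now apply Rabs_pos_lt.
  replace ((implicit_root (s + h) - implicit_root s) / h - l)
    with ((implicit_root (s + h) - implicit_root s - l * h) / h) by (field; auto).
  rewrite Rabs_div by auto.
  apply (Rmult_lt_reg_r (Rabs h)); auto. unfold Rdiv.
  rewrite Rmult_assoc, Rinv_l, Rmult_1_r by lra. nra.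
Qed.

Lemma implicit_root_ex_derive_n n s : Rabs (s - s0) < eps -> ex_derive_n implicit_root n s.
Proof.
  set (W := fun p : R * R => Rabs (fst p - t0) < r /\ Rabs (snd p - s0) < r).
  set (G := fun t s => - ds F t s * / dt F t s).
  assert (HW : open W) by apply open_rectangle.
  assert (HFW : Cinf W F) by (apply (Cinf_sub V); auto; intros [u v] [Hu Hv]; now apply Hrect).
  assert (HG : Cinf W G).
  { apply Cinf_mult; auto.
    - now apply Cinf_opp, Cinf_ds.
    - apply Cinf_inv; auto; [now apply Cinf_dt|].
      intros t s' [Ht Hs']. destruct (Hrect t s' Ht Hs'). lra. }
  assert (HTW : forall s, Rabs (s - s0) < eps ->
     W (implicit_root s, s) /\ is_derive implicit_root s (G (implicit_root s) s)).
  { intros s' Hs'. destruct (Hroot s' Hs'). split; [split; simpl; lra|].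
    apply implicit_root_derive, Hs'. }
  assert (Hchain : forall H s, Cinf W H -> Rabs (s - s0) < eps ->
     is_derive (fun u => H (implicit_root u) u) s
       (dt H (implicit_root s) s * G (implicit_root s) s + ds H (implicit_root s) s)).
  { intros H s' HH Hs'. destruct (HTW s' Hs'). now apply (is_derive_along_graph W). }
  (* Every derivative of T is a smooth function evaluated along the graph of T. *)
  assert (Hform : forall m, exists H, Cinf W H /\
     forall s, Rabs (s - s0) < eps -> Derive_n implicit_root m s = H (implicit_root s) s).
  { intros m. induction m as [|m [H [HH E]]].
    - exists (fun t _ => t). split; [apply Cinf_fst|reflexivity].
    - exists (fun t s => dt H t s * G t s + ds H t s). split.
      + apply (Cinf_plus W HW); [apply (Cinf_mult W HW)|apply Cinf_ds]; auto; now apply Cinf_dt.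
      + intros s' Hs'. simpl. apply is_derive_unique.
        apply (is_derive_ext_loc (fun u => H (implicit_root u) u)); [|now apply Hchain].
        eapply filter_imp; [|apply (locally_Rabs_lt s0 eps s' Hs')]. intros u Hu. now rewrite E. }
  intros Hs. destruct n as [|n]; [exact I|]. destruct (Hform n) as [H [HH E]].
  eexists. apply (is_derive_ext_loc (fun u => H (implicit_root u) u)); [|now apply Hchain].
  eapply filter_imp; [|apply (locally_Rabs_lt s0 eps s Hs)]. intros u Hu. now rewrite E.
Qed.

End ImplicitFunction.

Lemma implicit_function_pos V F t0 s0 : open V -> Cinf V F -> V (t0, s0) ->
  F t0 s0 = 0 -> 0 < dt F t0 s0 ->
  exists del eps (T : R -> R), 0 < eps /\ 0 < del /\
    (forall t s, Rabs (t - t0) < del -> Rabs (s - s0) < eps -> V (t, s) /\ dt F t s <> 0) /\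
    T s0 = t0 /\
    (forall s, Rabs (s - s0) < eps -> Rabs (T s - t0) < del /\ F (T s) s = 0) /\
    (forall t s, Rabs (t - t0) < del -> Rabs (s - s0) < eps -> F t s = 0 -> t = T s) /\
    (forall s, Rabs (s - s0) < eps -> is_derive T s (- ds F (T s) s / dt F (T s) s)) /\
    (forall n s, Rabs (s - s0) < eps -> ex_derive_n T n s).
Proof.
  intros HV HF H0 F0 Ha.
  destruct (rectangle_pos V (dt F) t0 s0 HV H0) as [r [Hr Hrect]]; auto.
  { apply (Cinf_continuity V); auto. now apply Cinf_dt. }
  destruct (implicit_root_near V F t0 s0 r HF Hr Hrect F0) as [eps [[Heps Hepsr] Hroot]].
  assert (Huniq := implicit_root_unique V F t0 s0 r HF Hrect).
  exists r, eps, (implicit_root F t0 r).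
  split; [lra|]. split; [lra|].
  split; [intros t s Ht Hs; destruct (Hrect t s Ht ltac:(lra)); split; [auto|lra]|].
  split; [symmetry; apply Huniq; auto; rewrite Rminus_diag, Rabs_R0; lra|].
  split; [intros s Hs; destruct (Hroot s Hs); split; [lra|auto]|].
  split; [intros t s Ht Hs Fts; apply Huniq; auto; lra|].
  split; intros; [now apply (implicit_root_derive V F t0 s0 r HV HF Hr Hrect eps)
                 |now apply (implicit_root_ex_derive_n V F t0 s0 r HV HF Hr Hrect eps)].
Qed.

Theorem implicit_function V F t0 s0 : open V -> Cinf V F -> V (t0, s0) ->
  F t0 s0 = 0 -> dt F t0 s0 <> 0 ->
  exists del eps (T : R -> R), 0 < eps /\ 0 < del /\
    (forall t s, Rabs (t - t0) < del -> Rabs (s - s0) < eps -> V (t, s) /\ dt F t s <> 0) /\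
    T s0 = t0 /\
    (forall s, Rabs (s - s0) < eps -> Rabs (T s - t0) < del /\ F (T s) s = 0) /\
    (forall t s, Rabs (t - t0) < del -> Rabs (s - s0) < eps -> F t s = 0 -> t = T s) /\
    (forall s, Rabs (s - s0) < eps -> is_derive T s (- ds F (T s) s / dt F (T s) s)) /\
    (forall n s, Rabs (s - s0) < eps -> ex_derive_n T n s).
Proof.
  intros HV HF H0 F0 Ha.
  destruct (Rlt_or_le 0 (dt F t0 s0)) as [Hpos|Hneg]; [now apply implicit_function_pos|].
  assert (Hopp : forall t s, dt (fun t s => - F t s) t s = - dt F t s /\
                             ds (fun t s => - F t s) t s = - ds F t s)
    by (intros; split; apply Derive_opp).
  destruct (implicit_function_pos V (fun t s => - F t s) t0 s0) as
    (del & eps & T & Heps & Hdel & Hrect & HT0 & Hroot & Huniq & HTd & HTn); auto.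
  { now apply Cinf_opp. }
  { lra. }
  { rewrite (proj1 (Hopp t0 s0)). lra. }
  exists del, eps, T. refine (conj Heps (conj Hdel (conj _ (conj HT0 _)))).
  { intros t s Ht Hs. destruct (Hrect t s Ht Hs) as [HVts Hne].
    rewrite (proj1 (Hopp t s)) in Hne. split; [auto|lra]. }
  split; [intros s Hs; destruct (Hroot s Hs) as [Hd E]; split; [auto|lra]|].
  split; [intros t s Ht Hs E; apply Huniq; auto; lra|].
  split; [|exact HTn].
  intros s Hs. destruct (Hopp (T s) s) as [E1 E2].
  destruct (Hrect (T s) s) as [_ Hne]; [now apply Hroot|auto|].
  replace (- ds F (T s) s / dt F (T s) s) with
    (- ds (fun t s => - F t s) (T s) s / dt (fun t s => - F t s) (T s) s); auto.
  rewrite E1, E2. rewrite E1 in Hne. field. contradict Hne. lra.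
Qed.

(** * Calculus of one variable and plane geometry *)

Lemma locally_sign (f : R -> R) x : ex_derive f x -> f x <> 0 ->
  exists d, 0 < d /\ forall y, Rabs (y - x) < d -> 0 < f y * f x.
Proof.
  intros Hd Hne. apply (ex_derive_continuous f) in Hd.
  destruct (proj1 (filterlim_locally f (f x)) Hd (mkposreal _ (Rabs_pos_lt _ Hne))) as [d Hdd].
  exists d. split; [apply cond_pos|]. intros y Hy. specialize (Hdd y Hy).
  change (Rabs (f y - f x) < Rabs (f x)) in Hdd. apply Rabs_lt_between in Hdd.
  destruct (Rcase_abs (f x)); [rewrite Rabs_left in Hdd|rewrite Rabs_right in Hdd]; nra.
Qed.

Lemma strict_min_of_convex (f f1 f2 : R -> R) x0 e :
  (forall x, Rabs (x - x0) < e -> is_derive f x (f1 x) /\ is_derive f1 x (f2 x) /\ 0 < f2 x) ->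
  f1 x0 = 0 -> forall x, Rabs (x - x0) < e -> x <> x0 -> f1 x <> 0 /\ f x0 < f x.
Proof.
  intros Hd H0 x Hx Hne.
  assert (Hball : forall y, x0 - e < y < x0 + e -> Rabs (y - x0) < e)
    by (intros y Hy; apply Rabs_lt_between; lra).
  assert (Hincr : forall y z, x0 - e < y -> y < z -> z < x0 + e -> f1 y < f1 z).
  { intros y z Hy Hyz Hz.
    apply (incr_function f1 (x0 - e) (x0 + e) f2); simpl; auto; intros u H1 H2; apply Hd, Hball; lra. }
  assert (Hmvt : forall a b, x0 - e < a -> a < b -> b < x0 + e ->
            exists c, f b - f a = f1 c * (b - a) /\ a < c < b).
  { intros a b Ha Hab Hb. apply MVT_cor2; auto.
    intros c Hc. apply is_derive_Reals, Hd, Hball. lra. }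
  apply Rabs_lt_between in Hx.
  destruct (Rtotal_order x x0) as [Hlt|[|Hgt]]; [|contradiction|].
  - destruct (Hmvt x x0) as [c [Ec Hc]]; try lra.
    assert (f1 c < 0) by (rewrite <- H0; apply Hincr; lra).
    assert (f1 x < 0) by (rewrite <- H0; apply Hincr; lra).
    split; nra.
  - destruct (Hmvt x0 x) as [c [Ec Hc]]; try lra.
    assert (0 < f1 c) by (rewrite <- H0; apply Hincr; lra).
    assert (0 < f1 x) by (rewrite <- H0; apply Hincr; lra).
    split; nra.
Qed.

Lemma det2_sq_add_ip_sq (a b : R * R) : det2 a b ^ 2 + ip a b ^ 2 = nrm2 a * nrm2 b.
Proof. destruct a, b. unfold det2, nrm2, ip; cbn [fst snd]. ring. Qed.

Lemma det2_sq_of_unit_normal (e a v : R * R) : nrm2 e = 1 -> ip e a = 0 ->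
  det2 a v ^ 2 = nrm2 a * ip e v ^ 2.
Proof.
  destruct e as [e1 e2], a as [a1 a2], v as [v1 v2]. unfold det2, nrm2, ip; cbn [fst snd].
  intros He Ha.
  (* a is a multiple of the unit normal (-e2, e1) to e *)
  set (lam := a2 * e1 - a1 * e2).
  assert (E1 : a1 = - e2 * lam).
  { transitivity (a1 * (e1 * e1 + e2 * e2) - e1 * (e1 * a1 + e2 * a2)); [rewrite He, Ha|unfold lam]; ring. }
  assert (E2 : a2 = e1 * lam).
  { transitivity (a2 * (e1 * e1 + e2 * e2) - e2 * (e1 * a1 + e2 * a2)); [rewrite He, Ha|unfold lam]; ring. }
  rewrite E1, E2. replace (- e2 * lam * (- e2 * lam) + e1 * lam * (e1 * lam))
    with (lam * lam * (e1 * e1 + e2 * e2)) by ring.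
  rewrite He. ring.
Qed.

Lemma cusp_jet_independent p1 p2 x1 x2 d2 d3 a b : d2 <> 0 -> 0 < x1 * x1 + x2 * x2 ->
  a * d2 + b * d3 = 0 ->
  a * (p1 * d2) + b * (2 * x1 * d2 + p1 * d3) = 0 ->
  a * (p2 * d2) + b * (2 * x2 * d2 + p2 * d3) = 0 -> a = 0 /\ b = 0.
Proof.
  intros Hd2 Hx E0 E1 E2.
  assert (H1 : 2 * (b * d2) * x1 = 0).
  { transitivity (a * (p1 * d2) + b * (2 * x1 * d2 + p1 * d3) - p1 * (a * d2 + b * d3)); [ring|].
    rewrite E1, E0. ring. }
  assert (H2 : 2 * (b * d2) * x2 = 0).
  { transitivity (a * (p2 * d2) + b * (2 * x2 * d2 + p2 * d3) - p2 * (a * d2 + b * d3)); [ring|].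
    rewrite E2, E0. ring. }
  assert (Hsq : (b * d2) * (b * d2) * (x1 * x1 + x2 * x2) = 0).
  { transitivity ((b * d2 * x1) * (b * d2 * x1) + (b * d2 * x2) * (b * d2 * x2)); [ring|].
    replace (b * d2 * x1) with 0 by lra. replace (b * d2 * x2) with 0 by lra. ring. }
  apply Rmult_integral in Hsq as [Hsq|]; [|lra].
  assert (Hb : b = 0).
  { destruct (Rmult_integral _ _ Hsq) as [Hb|Hb]; apply Rmult_integral in Hb as [|]; tauto. }
  subst b.
  split; [|reflexivity]. rewrite Rmult_0_l, Rplus_0_r in E0.
  apply Rmult_integral in E0 as [|]; [assumption|contradiction].
Qed.

Lemma pair_eq0 (a b : R) : (a, b) = (0, 0) <-> a = 0 /\ b = 0.
Proof. split; [intros H; now inversion H|now intros [-> ->]]. Qed.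

Lemma nrm2_eq0 (u : R * R) : nrm2 u = 0 <-> u = (0, 0).
Proof.
  destruct u as [a b]. unfold nrm2, ip; cbn [fst snd]. rewrite pair_eq0. split; [intros; split; nra|].
  intros [-> ->]. ring.
Qed.

Lemma nrm2_pos (u : R * R) : u <> (0, 0) -> 0 < nrm2 u.
Proof.
  intros Hu. rewrite <- nrm2_eq0 in Hu. destruct u as [a b]. unfold nrm2, ip in *; cbn [fst snd] in *.
  nra.
Qed.

Lemma is_derive_ip (a1 a2 b1 b2 : R -> R) x da1 da2 db1 db2 :
  is_derive a1 x da1 -> is_derive a2 x da2 -> is_derive b1 x db1 -> is_derive b2 x db2 ->
  is_derive (fun y => ip (a1 y, a2 y) (b1 y, b2 y)) x
    (ip (da1, da2) (b1 x, b2 x) + ip (a1 x, a2 x) (db1, db2)).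
Proof.
  intros. unfold ip; cbn [fst snd].
  replace (da1 * b1 x + da2 * b2 x + (a1 x * db1 + a2 x * db2))
    with ((da1 * b1 x + a1 x * db1) + (da2 * b2 x + a2 x * db2)) by ring.
  apply (is_derive_plus (fun y => a1 y * b1 y) (fun y => a2 y * b2 y));
    apply Derive.is_derive_mult; auto.
Qed.

Lemma is_derive_det2 (a1 a2 b1 b2 : R -> R) x da1 da2 db1 db2 :
  is_derive a1 x da1 -> is_derive a2 x da2 -> is_derive b1 x db1 -> is_derive b2 x db2 ->
  is_derive (fun y => det2 (a1 y, a2 y) (b1 y, b2 y)) x
    (det2 (da1, da2) (b1 x, b2 x) + det2 (a1 x, a2 x) (db1, db2)).
Proof.
  intros. unfold det2; cbn [fst snd].
  replace (da1 * b2 x - da2 * b1 x + (a1 x * db2 - a2 x * db1))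
    with ((da1 * b2 x + a1 x * db2) - (da2 * b1 x + a2 x * db1)) by ring.
  apply (is_derive_minus (fun y => a1 y * b2 y) (fun y => a2 y * b1 y));
    apply Derive.is_derive_mult; auto.
Qed.

(** * Differentiation along the graph of a smooth function *)

Section AlongGraph.

Variables (V : R * R -> Prop) (T : R -> R) (s0 eps : R).
Hypotheses (HV : open V) (Heps : 0 < eps)
  (HTV : forall s, Rabs (s - s0) < eps -> V (T s, s))
  (HTn : forall n s, Rabs (s - s0) < eps -> ex_derive_n T n s).

Lemma is_derive_Derive_n_T n s : Rabs (s - s0) < eps ->
  is_derive (Derive_n T n) s (Derive_n T (S n) s).
Proof. intros Hs. apply Derive_correct, (HTn (S n)), Hs. Qed.

Lemma is_derive_along f s : Cinf V f -> Rabs (s - s0) < eps ->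
  is_derive (fun u => f (T u) u) s (dt f (T s) s * Derive T s + ds f (T s) s).
Proof.
  intros Hf Hs. apply (is_derive_along_graph V); auto. apply (is_derive_Derive_n_T 0), Hs.
Qed.

Lemma along_zero_derive f s : Cinf V f -> (forall u, Rabs (u - s0) < eps -> f (T u) u = 0) ->
  Rabs (s - s0) < eps -> dt f (T s) s * Derive T s + ds f (T s) s = 0.
Proof.
  intros Hf H0 Hs. apply (is_derive_zero_of_locally_zero (fun u => f (T u) u) s).
  - eapply filter_imp; [|apply (locally_Rabs_lt s0 eps s Hs)]. exact H0.
  - now apply is_derive_along.
Qed.

Let Hs0 : Rabs (s0 - s0) < eps.
Proof. rewrite Rminus_diag, Rabs_R0. exact Heps. Qed.

Lemma along_zero_second_derive f : Cinf V f ->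
  (forall u, Rabs (u - s0) < eps -> f (T u) u = 0) -> Derive T s0 = 0 ->
  dt f (T s0) s0 * Derive_n T 2 s0 + ds (ds f) (T s0) s0 = 0.
Proof.
  intros Hf H0 HT1.
  assert (Dh := is_derive_plus (fun u => dt f (T u) u * Derive T u) (fun u => ds f (T u) u) s0 _ _
    (Derive.is_derive_mult _ _ s0 _ _ (is_derive_along (dt f) s0 (Cinf_dt V f Hf) Hs0)
                                      (is_derive_Derive_n_T 1 s0 Hs0))
    (is_derive_along (ds f) s0 (Cinf_ds V f Hf) Hs0)).
  apply (is_derive_zero_of_locally_zero _ s0) in Dh.
  - change (Derive_n T 1 s0) with (Derive T s0) in Dh. rewrite HT1 in Dh.
    change plus with Rplus in Dh. lra.
  - eapply filter_imp; [|apply (locally_Rabs_lt s0 eps s0 Hs0)].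
    intros u Hu. now apply along_zero_derive.
Qed.

Lemma along_Derive_n_2_3 f : Cinf V f ->
  (forall u, Rabs (u - s0) < eps -> ds f (T u) u = 0) -> Derive T s0 = 0 ->
  Derive_n (fun u => f (T u) u) 2 s0 = dt f (T s0) s0 * Derive_n T 2 s0 /\
  Derive_n (fun u => f (T u) u) 3 s0 =
    2 * ds (dt f) (T s0) s0 * Derive_n T 2 s0 + dt f (T s0) s0 * Derive_n T 3 s0.
Proof.
  intros Hf Hs HT1.
  set (A := fun u => dt (dt f) (T u) u * Derive T u + ds (dt f) (T u) u).
  assert (D1 : forall u, Rabs (u - s0) < eps ->
            Derive (fun v => f (T v) v) u = dt f (T u) u * Derive T u).
  { intros u Hu. apply is_derive_unique. rewrite <- (Rplus_0_r (_ * _)), <- (Hs u Hu).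
    now apply is_derive_along. }
  assert (D2 : forall u, Rabs (u - s0) < eps ->
            is_derive (Derive (fun v => f (T v) v)) u (A u * Derive T u + dt f (T u) u * Derive_n T 2 u)).
  { intros u Hu. apply (is_derive_ext_loc (fun v => dt f (T v) v * Derive T v)).
    - eapply filter_imp; [|apply (locally_Rabs_lt s0 eps u Hu)]. intros v Hv. now rewrite D1.
    - apply (Derive.is_derive_mult (fun v => dt f (T v) v) (Derive T));
        [|now apply (is_derive_Derive_n_T 1)].
      apply is_derive_along; auto. now apply Cinf_dt. }
  assert (HA : ex_derive A s0).
  { eexists. apply (is_derive_plus (fun u => dt (dt f) (T u) u * Derive T u)).
    - apply (Derive.is_derive_mult (fun v => dt (dt f) (T v) v) (Derive T));
        [|now apply (is_derive_Derive_n_T 1)].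
      apply is_derive_along; auto. now apply Cinf_dt, Cinf_dt.
    - apply is_derive_along; auto. now apply Cinf_ds, Cinf_dt. }
  destruct HA as [dA HA].
  assert (D3 : is_derive (Derive_n (fun v => f (T v) v) 2) s0
                 (dA * Derive T s0 + A s0 * Derive_n T 2 s0 +
                  (A s0 * Derive_n T 2 s0 + dt f (T s0) s0 * Derive_n T 3 s0))).
  { apply (is_derive_ext_loc (fun v => A v * Derive T v + dt f (T v) v * Derive_n T 2 v)).
    - eapply filter_imp; [|apply (locally_Rabs_lt s0 eps s0 Hs0)]. intros v Hv.
      symmetry. apply is_derive_unique, D2, Hv.
    - apply (is_derive_plus (fun v => A v * Derive T v)).
      + apply (Derive.is_derive_mult A (Derive T)); auto. now apply (is_derive_Derive_n_T 1).
      + apply (Derive.is_derive_mult (fun v => dt f (T v) v) (Derive_n T 2)).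
        * apply is_derive_along; auto. now apply Cinf_dt.
        * now apply (is_derive_Derive_n_T 2). }
  split.
  - change (Derive (Derive (fun v => f (T v) v)) s0 = dt f (T s0) s0 * Derive_n T 2 s0).
    rewrite (is_derive_unique _ _ _ (D2 s0 Hs0)), HT1. ring.
  - change (Derive (Derive_n (fun v => f (T v) v) 2) s0 = 2 * ds (dt f) (T s0) s0 * Derive_n T 2 s0 + dt f (T s0) s0 * Derive_n T 3 s0).
    rewrite (is_derive_unique _ _ _ D3). unfold A. rewrite HT1. ring.
Qed.

End AlongGraph.

(** * Timelike maximal surfaces *)

Definition vscale (k : R) (u : R * R) : R * R := (k * fst u, k * snd u).

Lemma ip_vscale_l k u v : ip (vscale k u) v = k * ip u v.
Proof. unfold ip, vscale; cbn [fst snd]. ring. Qed.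

Lemma ip_vscale_r k u v : ip u (vscale k v) = k * ip u v.
Proof. unfold ip, vscale; cbn [fst snd]. ring. Qed.

Lemma det2_vscale_l k u v : det2 (vscale k u) v = k * det2 u v.
Proof. unfold det2, vscale; cbn [fst snd]. ring. Qed.

Lemma nrm2_vscale k u : nrm2 (vscale k u) = k ^ 2 * nrm2 u.
Proof. unfold nrm2, ip, vscale; cbn [fst snd]. ring. Qed.

Section TimelikeMaximalSurface.

Variables (Om : R * R -> Prop) (g : R -> R -> R * R).
Hypotheses (HO : open Om) (Hg : smooth_map Om g)
  (Horth : forall t s, Om (t, s) -> ip (pdv (Dt :: nil) g t s) (pdv (Ds :: nil) g t s) = 0)
  (Hnorm : forall t s, Om (t, s) ->
     nrm2 (pdv (Dt :: nil) g t s) + nrm2 (pdv (Ds :: nil) g t s) = 1).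

Local Notation g_t := (pdv (Dt :: nil) g).
Local Notation g_s := (pdv (Ds :: nil) g).
Local Notation g_tt := (pdv (Dt :: Dt :: nil) g).
Local Notation g_ts := (pdv (Dt :: Ds :: nil) g).
Local Notation g_st := (pdv (Ds :: Dt :: nil) g).
Local Notation g_ss := (pdv (Ds :: Ds :: nil) g).
Local Notation g_sst := (pdv (Ds :: Ds :: Dt :: nil) g).
Local Notation g_sss := (pdv (Ds :: Ds :: Ds :: nil) g).

Lemma Cinf_gam1 w : Cinf Om (pd w (gam1 g)).
Proof. apply Cinf_of_smooth_on, Hg. Qed.
Lemma Cinf_gam2 w : Cinf Om (pd w (gam2 g)).
Proof. apply Cinf_of_smooth_on, Hg. Qed.

Lemma g_ts_g_st t s : Om (t, s) -> g_ts t s = g_st t s.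
Proof.
  intros H. unfold pdv. f_equal; apply (dt_ds_comm Om HO); auto; [apply (Cinf_gam1 nil)|apply (Cinf_gam2 nil)].
Qed.

Lemma is_derive_pdv_t w t s : Om (t, s) ->
  is_derive (fun u => pd w (gam1 g) u s) t (fst (pdv (Dt :: w) g t s)) /\
  is_derive (fun u => pd w (gam2 g) u s) t (snd (pdv (Dt :: w) g t s)).
Proof. intros H. split; apply (is_derive_dt Om); auto; [apply Cinf_gam1|apply Cinf_gam2]. Qed.

Lemma is_derive_pdv_s w t s : Om (t, s) ->
  is_derive (fun u => pd w (gam1 g) t u) s (fst (pdv (Ds :: w) g t s)) /\
  is_derive (fun u => pd w (gam2 g) t u) s (snd (pdv (Ds :: w) g t s)).
Proof. intros H. split; apply (is_derive_ds Om); auto; [apply Cinf_gam1|apply Cinf_gam2]. Qed.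

Lemma singular_nrm2_g_t t s : Om (t, s) -> g_s t s = (0, 0) -> nrm2 (g_t t s) = 1.
Proof. intros H E. generalize (Hnorm t s H). rewrite E. unfold nrm2, ip; cbn [fst snd]. lra. Qed.

Lemma singular_ip_g_t_g_ts t s : Om (t, s) -> g_s t s = (0, 0) -> ip (g_t t s) (g_ts t s) = 0.
Proof.
  intros H E. destruct (is_derive_pdv_t (Dt :: nil) t s H) as [D1 D2].
  destruct (is_derive_pdv_t (Ds :: nil) t s H) as [D3 D4].
  assert (D := is_derive_ip _ _ _ _ t _ _ _ _ D1 D2 D3 D4).
  apply (is_derive_zero_of_locally_zero _ t) in D.
  - change (ip (g_tt t s) (g_s t s) + ip (g_t t s) (g_ts t s) = 0) in D.
    rewrite E in D. unfold ip in *; cbn [fst snd] in *. lra.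
  - eapply filter_imp; [|apply (locally_open_t Om t s HO H)]. intros u Hu. now apply Horth.
Qed.

Lemma singular_ip_g_t_g_sss t s : Om (t, s) -> g_s t s = (0, 0) ->
  2 * ip (g_ts t s) (g_ss t s) + ip (g_t t s) (g_sss t s) = 0.
Proof.
  intros H E.
  assert (Hs : forall u, Om (t, u) -> ip (g_st t u) (g_s t u) + ip (g_t t u) (g_ss t u) = 0).
  { intros u Hu. destruct (is_derive_pdv_s (Dt :: nil) t u Hu) as [D1 D2].
    destruct (is_derive_pdv_s (Ds :: nil) t u Hu) as [D3 D4].
    eapply is_derive_zero_of_locally_zero; [|exact (is_derive_ip _ _ _ _ u _ _ _ _ D1 D2 D3 D4)].
    eapply filter_imp; [|apply (locally_open_s Om t u HO Hu)]. intros v Hv. now apply Horth. }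
  destruct (is_derive_pdv_s (Ds :: Dt :: nil) t s H) as [D1 D2].
  destruct (is_derive_pdv_s (Ds :: nil) t s H) as [D3 D4].
  destruct (is_derive_pdv_s (Dt :: nil) t s H) as [D5 D6].
  destruct (is_derive_pdv_s (Ds :: Ds :: nil) t s H) as [D7 D8].
  assert (D := is_derive_plus _ _ s _ _ (is_derive_ip _ _ _ _ s _ _ _ _ D1 D2 D3 D4)
                                        (is_derive_ip _ _ _ _ s _ _ _ _ D5 D6 D7 D8)).
  apply (is_derive_zero_of_locally_zero _ s) in D.
  - change (ip (g_sst t s) (g_s t s) + ip (g_st t s) (g_ss t s) +
            (ip (g_st t s) (g_ss t s) + ip (g_t t s) (g_sss t s)) = 0) in D.
    rewrite E, <- (g_ts_g_st t s H) in D. unfold ip in *; cbn [fst snd] in *. lra.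
  - eapply filter_imp; [|apply (locally_open_s Om t s HO H)]. exact Hs.
Qed.


Lemma Cinf_nrm2 w : Cinf Om (fun t s => nrm2 (pdv w g t s)).
Proof.
  apply (Cinf_ext Om HO (fun t s => pd w (gam1 g) t s * pd w (gam1 g) t s +
                                    pd w (gam2 g) t s * pd w (gam2 g) t s)); [|reflexivity].
  apply (Cinf_plus Om HO); apply (Cinf_mult Om HO); apply Cinf_gam1 || apply Cinf_gam2.
Qed.

Lemma Cinf_det2_g_t_g_s : Cinf Om (fun t s => det2 (g_t t s) (g_s t s)).
Proof.
  apply (Cinf_ext Om HO (fun t s => pd (Dt :: nil) (gam1 g) t s * pd (Ds :: nil) (gam2 g) t s -
                                    pd (Dt :: nil) (gam2 g) t s * pd (Ds :: nil) (gam1 g) t s));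
    [|reflexivity].
  apply (Cinf_minus Om HO); apply (Cinf_mult Om HO); apply Cinf_gam1 || apply Cinf_gam2.
Qed.

Lemma singular_iff_det2 t s : Om (t, s) -> 0 < nrm2 (g_t t s) ->
  g_s t s = (0, 0) <-> det2 (g_t t s) (g_s t s) = 0.
Proof.
  intros H Hpos. split; intros E.
  - rewrite E. unfold det2; cbn [fst snd]. ring.
  - apply nrm2_eq0. generalize (det2_sq_add_ip_sq (g_t t s) (g_s t s)).
    rewrite E, (Horth t s H). intros Z.
    apply (Rmult_eq_reg_l (nrm2 (g_t t s))); lra.
Qed.

Lemma dt_det2_singular t s : Om (t, s) -> g_s t s = (0, 0) ->
  dt (fun t s => det2 (g_t t s) (g_s t s)) t s = det2 (g_t t s) (g_ts t s).
Proof.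
  intros H E. destruct (is_derive_pdv_t (Dt :: nil) t s H) as [D1 D2].
  destruct (is_derive_pdv_t (Ds :: nil) t s H) as [D3 D4].
  apply is_derive_unique.
  replace (det2 (g_t t s) (g_ts t s)) with (det2 (g_tt t s) (g_s t s) + det2 (g_t t s) (g_ts t s))
    by (rewrite E; unfold det2; cbn [fst snd]; ring).
  exact (is_derive_det2 _ _ _ _ t _ _ _ _ D1 D2 D3 D4).
Qed.

Lemma singular_det2_sq t s : Om (t, s) -> g_s t s = (0, 0) ->
  det2 (g_t t s) (g_ts t s) ^ 2 = nrm2 (g_ts t s).
Proof.
  intros H E. generalize (det2_sq_add_ip_sq (g_t t s) (g_ts t s)).
  rewrite (singular_ip_g_t_g_ts t s H E), (singular_nrm2_g_t t s H E). lra.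
Qed.

Lemma singular_curve_exists t0 s0 : Om (t0, s0) -> g_s t0 s0 = (0, 0) -> g_ts t0 s0 <> (0, 0) ->
  exists del eps (T : R -> R), 0 < eps /\ 0 < del /\ T s0 = t0 /\
    (forall t s, Rabs (t - t0) < del -> Rabs (s - s0) < eps -> Om (t, s) /\ 0 < nrm2 (g_ts t s)) /\
    (forall s, Rabs (s - s0) < eps -> Rabs (T s - t0) < del) /\
    (forall t s, Rabs (t - t0) < del -> Rabs (s - s0) < eps -> (g_s t s = (0, 0) <-> t = T s)) /\
    (forall n s, Rabs (s - s0) < eps -> ex_derive_n T n s).
Proof.
  intros H0 E0 Hts0.
  (* on V0, g_s = 0 iff det2 g_t g_s = 0, and g_ts stays nonzero *)
  set (V0 := fun p : R * R => (Om p /\ 1 / 2 < nrm2 (g_t (fst p) (snd p))) /\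
                              0 < nrm2 (g_ts (fst p) (snd p))).
  assert (HV0 : open V0).
  { apply (open_and_lt _ (fun t s => nrm2 (g_ts t s)));
      [apply (open_and_lt _ (fun t s => nrm2 (g_t t s))); auto|];
      intros t s Hts; apply (Cinf_continuity Om); try apply Cinf_nrm2; [exact Hts|apply Hts]. }
  assert (HV00 : V0 (t0, s0)).
  { unfold V0; cbn [fst snd]. rewrite (singular_nrm2_g_t t0 s0 H0 E0).
    repeat split; auto; [lra|now apply nrm2_pos]. }
  destruct (implicit_function V0 (fun t s => det2 (g_t t s) (g_s t s)) t0 s0) as
    (del & eps & T & Heps & Hdel & Hrect & HT0 & Hroot & Huniq & _ & HTn); auto.
  { apply (Cinf_sub Om); [now intros p [[Hp _] _]|apply Cinf_det2_g_t_g_s]. }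
  { cbn beta. rewrite E0. unfold det2; cbn [fst snd]. ring. }
  { rewrite (dt_det2_singular t0 s0 H0 E0). intros Z.
    generalize (singular_det2_sq t0 s0 H0 E0) (nrm2_pos _ Hts0). rewrite Z. lra. }
  exists del, eps, T. do 3 (split; [auto|]).
  split; [intros t s Ht Hs; destruct (Hrect t s Ht Hs) as [[[? _] ?] _]; auto|].
  split; [intros s Hs; now apply Hroot|].
  split; [|exact HTn].
  intros t s Ht Hs. destruct (Hrect t s Ht Hs) as [[[HOm Hpos] _] _]. cbn [fst snd] in Hpos.
  rewrite singular_iff_det2 by (auto; lra). split; [now apply Huniq|].
  intros ->. now apply Hroot.
Qed.

Section SingularCurve.

Variables (t0 s0 eps del : R) (T : R -> R).
Hypotheses (Heps : 0 < eps) (Hdel : 0 < del) (HT0 : T s0 = t0)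
  (Hrect : forall t s, Rabs (t - t0) < del -> Rabs (s - s0) < eps ->
             Om (t, s) /\ 0 < nrm2 (g_ts t s))
  (HTdel : forall s, Rabs (s - s0) < eps -> Rabs (T s - t0) < del)
  (Hsing : forall t s, Rabs (t - t0) < del -> Rabs (s - s0) < eps ->
             (g_s t s = (0, 0) <-> t = T s))
  (HTn : forall n s, Rabs (s - s0) < eps -> ex_derive_n T n s).

Lemma curve_in_Om s : Rabs (s - s0) < eps -> Om (T s, s).
Proof. intros Hs. now destruct (Hrect (T s) s (HTdel s Hs) Hs). Qed.

Lemma curve_g_ts_pos s : Rabs (s - s0) < eps -> 0 < nrm2 (g_ts (T s) s).
Proof. intros Hs. now destruct (Hrect (T s) s (HTdel s Hs) Hs). Qed.

Lemma curve_singular s : Rabs (s - s0) < eps -> g_s (T s) s = (0, 0).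
Proof. intros Hs. apply Hsing; auto. Qed.

Let Hs0 : Rabs (s0 - s0) < eps.
Proof. rewrite Rminus_diag, Rabs_R0. exact Heps. Qed.

Lemma curve_g_s_components :
  (forall u, Rabs (u - s0) < eps -> pd (Ds :: nil) (gam1 g) (T u) u = 0) /\
  (forall u, Rabs (u - s0) < eps -> pd (Ds :: nil) (gam2 g) (T u) u = 0).
Proof. split; intros u Hu; apply (proj1 (pair_eq0 _ _) (curve_singular u Hu)). Qed.

Lemma curve_g_ss s : Rabs (s - s0) < eps -> g_ss (T s) s = vscale (- Derive T s) (g_ts (T s) s).
Proof.
  intros Hs. destruct curve_g_s_components as [Z1 Z2].
  assert (E1 := along_zero_derive Om T s0 eps HO curve_in_Om HTn _ s (Cinf_gam1 _) Z1 Hs).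
  assert (E2 := along_zero_derive Om T s0 eps HO curve_in_Om HTn _ s (Cinf_gam2 _) Z2 Hs).
  change (pd (Dt :: Ds :: nil) (gam1 g) (T s) s * Derive T s +
          pd (Ds :: Ds :: nil) (gam1 g) (T s) s = 0) in E1.
  change (pd (Dt :: Ds :: nil) (gam2 g) (T s) s * Derive T s +
          pd (Ds :: Ds :: nil) (gam2 g) (T s) s = 0) in E2.
  unfold vscale, pdv; cbn [fst snd]. f_equal; lra.
Qed.

Lemma curve_is_derive s : Rabs (s - s0) < eps ->
  g_ts (T s) s <> (0, 0) /\
  is_derive T s (- ip (g_ss (T s) s) (g_ts (T s) s) / nrm2 (g_ts (T s) s)).
Proof.
  intros Hs. assert (Hpos := curve_g_ts_pos s Hs). split.
  - rewrite <- nrm2_eq0. lra.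
  - rewrite (curve_g_ss s Hs), ip_vscale_l.
    replace (- (- Derive T s * ip (g_ts (T s) s) (g_ts (T s) s)) / nrm2 (g_ts (T s) s))
      with (Derive T s)
      by (unfold nrm2 in *; field; lra).
    exact (Derive_correct _ _ (HTn 1 s Hs)).
Qed.

Lemma curve_Derive_crv s : Rabs (s - s0) < eps ->
  Derive (crv1 T g) s = fst (g_t (T s) s) * Derive T s /\
  Derive (crv2 T g) s = snd (g_t (T s) s) * Derive T s.
Proof.
  intros Hs. destruct curve_g_s_components as [Z1 Z2].
  assert (D1 := is_derive_along Om T s0 eps HO curve_in_Om HTn _ s (Cinf_gam1 nil) Hs).
  assert (D2 := is_derive_along Om T s0 eps HO curve_in_Om HTn _ s (Cinf_gam2 nil) Hs).
  rewrite (is_derive_unique (crv1 T g) s _ D1), (is_derive_unique (crv2 T g) s _ D2).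
  change (pd (Dt :: nil) (gam1 g) (T s) s * Derive T s + pd (Ds :: nil) (gam1 g) (T s) s =
          pd (Dt :: nil) (gam1 g) (T s) s * Derive T s /\
          pd (Dt :: nil) (gam2 g) (T s) s * Derive T s + pd (Ds :: nil) (gam2 g) (T s) s =
          pd (Dt :: nil) (gam2 g) (T s) s * Derive T s).
  rewrite (Z1 s Hs), (Z2 s Hs). split; ring.
Qed.

Lemma curve_null s : Rabs (s - s0) < eps -> null_at T g s.
Proof.
  intros Hs. unfold null_at, crv0. destruct (curve_Derive_crv s Hs) as [-> ->].
  assert (Hn := singular_nrm2_g_t (T s) s (curve_in_Om s Hs) (curve_singular s Hs)).
  unfold nrm2, ip in Hn.
  replace (- Derive T s ^ 2 + (fst (g_t (T s) s) * Derive T s) ^ 2 + (snd (g_t (T s) s) * Derive T s) ^ 2)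
    with (Derive T s ^ 2 * (fst (g_t (T s) s) * fst (g_t (T s) s) + snd (g_t (T s) s) * snd (g_t (T s) s) - 1))
    by ring.
  rewrite Hn. ring.
Qed.

Lemma singular_curve_properties e : 0 < e <= eps ->
  0 < e /\ 0 < del /\
  (forall t s, Rabs (t - t0) < del -> Rabs (s - s0) < e -> Om (t, s)) /\
  T s0 = t0 /\
  (forall s, Rabs (s - s0) < e -> Rabs (T s - t0) < del) /\
  (forall (n : nat) s, Rabs (s - s0) < e -> ex_derive_n T n s) /\
  (forall s, Rabs (s - s0) < e ->
     g_ts (T s) s <> (0, 0) /\
     is_derive T s (- ip (g_ss (T s) s) (g_ts (T s) s) / nrm2 (g_ts (T s) s))) /\
  (forall t s, Rabs (t - t0) < del -> Rabs (s - s0) < e -> (singular g t s <-> t = T s)) /\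
  (forall s, Rabs (s - s0) < e -> null_at T g s).
Proof.
  intros [He Hee].
  do 2 (split; [lra|]).
  split; [intros t s Ht Hs; apply Hrect; lra|].
  split; [exact HT0|].
  split; [intros s Hs; apply HTdel; lra|].
  split; [intros n s Hs; apply HTn; lra|].
  split; [intros s Hs; apply curve_is_derive; lra|].
  split; [intros t s Ht Hs; apply Hsing; lra|].
  intros s Hs; apply curve_null; lra.
Qed.

Section Cusp.

Hypotheses (Hss0 : g_ss t0 s0 = (0, 0)) (Hsss0 : g_sss t0 s0 <> (0, 0)).

Lemma curve_Derive_T_s0 : Derive T s0 = 0.
Proof.
  assert (E := f_equal nrm2 (curve_g_ss s0 Hs0)).
  assert (Hpos := curve_g_ts_pos s0 Hs0).
  rewrite nrm2_vscale, HT0, Hss0 in E. rewrite HT0 in Hpos.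
  rewrite (proj2 (nrm2_eq0 (0, 0)) eq_refl) in E.
  destruct (Rmult_integral _ _ (eq_sym E)) as [Z|Z]; [|lra]. nra.
Qed.

Lemma curve_g_sss_s0 : g_sss t0 s0 = vscale (- Derive_n T 2 s0) (g_ts t0 s0).
Proof.
  destruct curve_g_s_components as [Z1 Z2].
  assert (E1 := along_zero_second_derive Om T s0 eps HO Heps curve_in_Om HTn _ (Cinf_gam1 _) Z1
                  curve_Derive_T_s0).
  assert (E2 := along_zero_second_derive Om T s0 eps HO Heps curve_in_Om HTn _ (Cinf_gam2 _) Z2
                  curve_Derive_T_s0).
  rewrite HT0 in E1, E2.
  change (pd (Dt :: Ds :: nil) (gam1 g) t0 s0 * Derive_n T 2 s0 +
          pd (Ds :: Ds :: Ds :: nil) (gam1 g) t0 s0 = 0) in E1.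
  change (pd (Dt :: Ds :: nil) (gam2 g) t0 s0 * Derive_n T 2 s0 +
          pd (Ds :: Ds :: Ds :: nil) (gam2 g) t0 s0 = 0) in E2.
  unfold vscale, pdv; cbn [fst snd]. f_equal; lra.
Qed.

Lemma curve_Derive_n_T_2_s0 : Derive_n T 2 s0 <> 0.
Proof. intros Z. apply Hsss0. rewrite curve_g_sss_s0, Z. unfold vscale. f_equal; ring. Qed.

Lemma curve_plane_cusp s : Rabs (s - s0) < eps -> Derive T s <> 0 -> plane_cusp g (T s) s.
Proof.
  intros Hs Hl. assert (HOs := curve_in_Om s Hs). assert (E := curve_singular s Hs).
  split; [exact E|].
  assert (Hpos := curve_g_ts_pos s Hs).
  assert (Hip := singular_ip_g_t_g_sss _ _ HOs E).
  assert (Hsq := det2_sq_of_unit_normal _ _ (g_sss (T s) s)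
                   (singular_nrm2_g_t _ _ HOs E) (singular_ip_g_t_g_ts _ _ HOs E)).
  rewrite (curve_g_ss s Hs), ip_vscale_r in Hip.
  rewrite (curve_g_ss s Hs), det2_vscale_l. intros Z.
  apply Rmult_integral in Z as [Z|Z]; [lra|]. rewrite Z in Hsq.
  replace (ip (g_t (T s) s) (g_sss (T s) s)) with (2 * Derive T s * nrm2 (g_ts (T s) s)) in Hsq
    by (unfold nrm2; lra).
  assert (Hl2 := Rsqr_pos_lt _ Hl). unfold Rsqr in Hl2.
  assert (0 < nrm2 (g_ts (T s) s) * (2 * Derive T s * nrm2 (g_ts (T s) s)) ^ 2).
  { apply Rmult_lt_0_compat; [lra|]. simpl. rewrite Rmult_1_r.
    assert (0 < nrm2 (g_ts (T s) s) * nrm2 (g_ts (T s) s)) by nra. nra. }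
  simpl in Hsq. lra.
Qed.

Lemma curve_spacetime_cusp : spacetime_cusp T g s0.
Proof.
  destruct curve_g_s_components as [Z1 Z2].
  assert (HT1 := curve_Derive_T_s0). assert (HT2 := curve_Derive_n_T_2_s0).
  destruct (curve_Derive_crv s0 Hs0) as [C1 C2].
  destruct (along_Derive_n_2_3 Om T s0 eps HO Heps curve_in_Om HTn _ (Cinf_gam1 nil) Z1 HT1)
    as [A2 A3].
  destruct (along_Derive_n_2_3 Om T s0 eps HO Heps curve_in_Om HTn _ (Cinf_gam2 nil) Z2 HT1)
    as [B2 B3].
  assert (Hpos := curve_g_ts_pos s0 Hs0).
  assert (Hst := g_ts_g_st _ _ (curve_in_Om s0 Hs0)).
  rewrite HT0 in *.
  unfold spacetime_cusp, crv0. split; [exact HT1|].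
  split; [rewrite C1, HT1; ring|]. split; [rewrite C2, HT1; ring|].
  intros a b Ea Eb Ec.
  change (crv1 T g) with (fun u => pd nil (gam1 g) (T u) u) in Eb.
  change (crv2 T g) with (fun u => pd nil (gam2 g) (T u) u) in Ec.
  rewrite A2, A3 in Eb. rewrite B2, B3 in Ec.
  unfold pdv in Hpos. unfold nrm2, ip in Hpos. cbn [fst snd] in Hpos.
  assert (Hst1 : pd (Dt :: Ds :: nil) (gam1 g) t0 s0 = pd (Ds :: Dt :: nil) (gam1 g) t0 s0)
    by exact (f_equal fst Hst).
  assert (Hst2 : pd (Dt :: Ds :: nil) (gam2 g) t0 s0 = pd (Ds :: Dt :: nil) (gam2 g) t0 s0)
    by exact (f_equal snd Hst).
  change (ds (dt (pd nil (gam1 g))) t0 s0) with (pd (Ds :: Dt :: nil) (gam1 g) t0 s0) in Eb.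
  change (ds (dt (pd nil (gam2 g))) t0 s0) with (pd (Ds :: Dt :: nil) (gam2 g) t0 s0) in Ec.
  rewrite <- Hst1 in Eb. rewrite <- Hst2 in Ec.
  exact (cusp_jet_independent _ _ _ _ _ _ a b HT2 Hpos Ea Eb Ec).
Qed.

Lemma curve_convexity : exists e, 0 < e <= eps /\
  forall s, Rabs (s - s0) < e -> 0 < Derive_n T 2 s * Derive_n T 2 s0.
Proof.
  destruct (locally_sign (Derive_n T 2) s0 (HTn 3 s0 Hs0) curve_Derive_n_T_2_s0) as [d [Hd Hsgn]].
  exists (Rmin eps d). split; [split; [now apply Rmin_pos|apply Rmin_l]|].
  intros s Hs. apply Hsgn. exact (Rlt_le_trans _ _ _ Hs (Rmin_r _ _)).
Qed.

Lemma curve_strict_extremum : exists e, 0 < e <= eps /\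
  forall s, Rabs (s - s0) < e -> s <> s0 ->
    Derive T s <> 0 /\ (Derive_n T 2 s0 < 0 -> T s < t0) /\ (0 < Derive_n T 2 s0 -> t0 < T s).
Proof.
  destruct curve_convexity as [e [[He Hee] Hsgn]]. exists e. split; [lra|].
  intros s Hs Hne. rewrite <- HT0.
  assert (Hball : forall x, Rabs (x - s0) < e -> Rabs (x - s0) < eps) by (intros; lra).
  assert (D1 : forall x, Rabs (x - s0) < e -> is_derive T x (Derive T x))
    by (intros x Hx; exact (Derive_correct _ _ (HTn 1 x (Hball x Hx)))).
  assert (D2 : forall x, Rabs (x - s0) < e -> is_derive (Derive T) x (Derive_n T 2 x))
    by (intros x Hx; exact (is_derive_Derive_n_T T s0 eps HTn 1 x (Hball x Hx))).
  destruct (Rlt_or_le (Derive_n T 2 s0) 0) as [Hn|Hp].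
  - destruct (strict_min_of_convex (fun x => - T x) (fun x => - Derive T x)
                (fun x => - Derive_n T 2 x) s0 e) with (x := s) as [A B]; auto.
    + intros x Hx. specialize (Hsgn x Hx).
      split; [exact (is_derive_opp _ _ _ (D1 x Hx))|].
      split; [exact (is_derive_opp _ _ _ (D2 x Hx))|nra].
    + rewrite curve_Derive_T_s0. ring.
    + repeat split; intros; lra.
  - assert (Hp' : 0 < Derive_n T 2 s0)
      by (destruct Hp; [auto|exfalso; now apply curve_Derive_n_T_2_s0]).
    destruct (strict_min_of_convex T (Derive T) (Derive_n T 2) s0 e) with (x := s) as [A B]; auto.
    + intros x Hx. specialize (Hsgn x Hx). split; [now apply D1|split; [now apply D2|nra]].
    + exact curve_Derive_T_s0.
    + repeat split; intros; lra.
Qed.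

Lemma curve_cusp_properties : exists e, 0 < e <= eps /\
  (forall s, Rabs (s - s0) < e -> s <> s0 -> plane_cusp g (T s) s) /\
  (0 < ip (g_sss t0 s0) (g_ts t0 s0) ->
     forall s, Rabs (s - s0) < e -> s <> s0 -> T s < t0) /\
  (ip (g_sss t0 s0) (g_ts t0 s0) < 0 ->
     forall s, Rabs (s - s0) < e -> s <> s0 -> t0 < T s) /\
  (forall s, Rabs (s - s0) < e -> s <> s0 -> Derive T s <> 0) /\
  spacetime_cusp T g s0.
Proof.
  destruct curve_strict_extremum as [e [[He Hee] Hext]].
  assert (Hpos := curve_g_ts_pos s0 Hs0). rewrite HT0 in Hpos.
  assert (Hip : ip (g_sss t0 s0) (g_ts t0 s0) = - Derive_n T 2 s0 * nrm2 (g_ts t0 s0))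
    by (rewrite curve_g_sss_s0, ip_vscale_l; reflexivity).
  exists e. split; [lra|]. rewrite Hip.
  split; [intros s Hs Hne; apply curve_plane_cusp; [lra|now apply Hext]|].
  split; [intros Hsgn s Hs Hne; apply Hext; auto; nra|].
  split; [intros Hsgn s Hs Hne; apply Hext; auto; nra|].
  split; [intros s Hs Hne; now apply Hext|].
  exact curve_spacetime_cusp.
Qed.

End Cusp.

End SingularCurve.

End TimelikeMaximalSurface.

Theorem proposition3p2 (Om : R * R -> Prop) (g : R -> R -> R * R) (t0 s0 : R) :
  open Om ->
  smooth_map Om g ->
  (forall t s, Om (t, s) -> pdv (Dt :: Dt :: nil) g t s = pdv (Ds :: Ds :: nil) g t s) ->
  (forall t s, Om (t, s) -> ip (pdv (Dt :: nil) g t s) (pdv (Ds :: nil) g t s) = 0) ->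
  (forall t s, Om (t, s) -> nrm2 (pdv (Dt :: nil) g t s) + nrm2 (pdv (Ds :: nil) g t s) = 1) ->
  Om (t0, s0) ->
  pdv (Ds :: nil) g t0 s0 = (0, 0) ->
  pdv (Dt :: Ds :: nil) g t0 s0 <> (0, 0) ->
  exists (eps del : R) (T : R -> R),
    0 < eps /\ 0 < del /\
    (forall t s, Rabs (t - t0) < del -> Rabs (s - s0) < eps -> Om (t, s)) /\
    T s0 = t0 /\
    (forall s, Rabs (s - s0) < eps -> Rabs (T s - t0) < del) /\
    (forall (n : nat) s, Rabs (s - s0) < eps -> ex_derive_n T n s) /\
    (forall s, Rabs (s - s0) < eps ->
       pdv (Dt :: Ds :: nil) g (T s) s <> (0, 0) /\
       is_derive T s
         (- ip (pdv (Ds :: Ds :: nil) g (T s) s) (pdv (Dt :: Ds :: nil) g (T s) s)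
            / nrm2 (pdv (Dt :: Ds :: nil) g (T s) s))) /\
    (forall t s, Rabs (t - t0) < del -> Rabs (s - s0) < eps ->
       (singular g t s <-> t = T s)) /\
    (forall s, Rabs (s - s0) < eps -> null_at T g s) /\
    (pdv (Ds :: Ds :: nil) g t0 s0 = (0, 0) ->
     pdv (Ds :: Ds :: Ds :: nil) g t0 s0 <> (0, 0) ->
       (forall s, Rabs (s - s0) < eps -> s <> s0 -> plane_cusp g (T s) s) /\
       (0 < ip (pdv (Ds :: Ds :: Ds :: nil) g t0 s0) (pdv (Dt :: Ds :: nil) g t0 s0) ->
          forall s, Rabs (s - s0) < eps -> s <> s0 -> T s < t0) /\
       (ip (pdv (Ds :: Ds :: Ds :: nil) g t0 s0) (pdv (Dt :: Ds :: nil) g t0 s0) < 0 ->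
          forall s, Rabs (s - s0) < eps -> s <> s0 -> t0 < T s) /\
       (forall s, Rabs (s - s0) < eps -> s <> s0 -> Derive T s <> 0) /\
       spacetime_cusp T g s0).
Proof.
  intros HO Hg _ Horth Hnorm H0 Hs0 Hts0.
  destruct (singular_curve_exists Om g HO Hg Horth Hnorm t0 s0 H0 Hs0 Hts0)
    as (del & eps & T & Heps & Hdel & HT0 & Hrect & HTdel & Hsing & HTn).
  destruct (classic (pdv (Ds :: Ds :: nil) g t0 s0 = (0, 0) /\
                     pdv (Ds :: Ds :: Ds :: nil) g t0 s0 <> (0, 0))) as [[Hss Hsss]|Hgen].
  - edestruct (curve_cusp_properties Om g) with (t0 := t0) (s0 := s0) (eps := eps) (del := del) (T := T)
      as (e & He & Hcusp); eauto.
    exists e, del, T.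
    edestruct (singular_curve_properties Om g) with (eps := eps) (del := del) (T := T) (e := e)
      as (A1 & A2 & A3 & A4 & A5 & A6 & A7 & A8 & A9); eauto.
    repeat (split; [assumption|]). intros _ _. exact Hcusp.
  - exists eps, del, T.
    edestruct (singular_curve_properties Om g) with (eps := eps) (del := del) (T := T) (e := eps)
      as (A1 & A2 & A3 & A4 & A5 & A6 & A7 & A8 & A9); eauto; [split; [exact Heps|apply Rle_refl]|].
    repeat (split; [assumption|]). intros Hss Hsss. tauto.
Qed.
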